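(* Let $E=\{x:\langle Ax,x\rangle=1\}$, $A=\operatorname{diag}(1/a_1^2,1/a_2^2)$, be an ellipse. For an $n$-periodic billiard trajectory $P=(p_1,\dots,p_n)$ in $E$ with unit side vectors $u_i=(p_{i+1}-p_i)/|p_{i+1}-p_i|$, set $J(P)=-\langle u_1,Ap_1\rangle$. Then $J(P)$ is constant as $P$ varies in a 1-parameter family of $n$-periodic billiard trajectories in $E$.
   Context: An $n$-periodic billiard trajectory in the ellipse $E$ is a closed polygon $P=(p_1,\dots,p_n)$ (indices mod $n$) with all $p_i\in E$ that obeys the law of reflection at every vertex. All sides of such a trajectory are tangent to a common conic confocal with $E$ (the caustic). A 1-parameter family of $n$-periodic billiard trajectories is a continuous family of such polygons all tangent to the same confocal caustic. *)

From Stdlib Require Import Reals Lra.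
Open Scope R_scope.

Definition pt : Type := (R * R)%type.
Definition vadd (x y : pt) : pt := (fst x + fst y, snd x + snd y).
Definition vsub (x y : pt) : pt := (fst x - fst y, snd x - snd y).
Definition vscal (c : R) (x : pt) : pt := (c * fst x, c * snd x).
Definition dot (x y : pt) : R := fst x * fst y + snd x * snd y.
Definition vnorm (x : pt) : R := sqrt (dot x x).

Definition Amat (a1 a2 : R) (x : pt) : pt := (fst x / a1 ^ 2, snd x / a2 ^ 2).
Definition on_ellipse (a1 a2 : R) (x : pt) : Prop := dot (Amat a1 a2 x) x = 1.

(* A polygon is a sequence of vertices p : nat -> pt, indices taken mod n
   via n-periodicity; vertex p_1 of the paper is p 0. *)
Definition side (p : nat -> pt) (i : nat) : pt := vsub (p (S i)) (p i).
Definition unit_side (p : nat -> pt) (i : nat) : pt :=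
  vscal (/ vnorm (side p i)) (side p i).

(* Law of reflection at vertex p (S i): the outgoing unit direction is the
   mirror image of the incoming one in the tangent line of E at p (S i),
   whose normal is A p (S i). *)
Definition reflection_law (a1 a2 : R) (p : nat -> pt) (i : nat) : Prop :=
  let N := Amat a1 a2 (p (S i)) in
  let u := unit_side p i in
  unit_side p (S i) = vsub u (vscal (2 * dot u N / dot N N) N).

Definition billiard_traj (a1 a2 : R) (n : nat) (p : nat -> pt) : Prop :=
  (0 < n)%nat /\
  (forall i, p (i + n)%nat = p i) /\
  (forall i, on_ellipse a1 a2 (p i)) /\
  (forall i, p (S i) <> p i) /\
  (forall i, reflection_law a1 a2 p i).

Definition Cmat (a1 a2 lam : R) (x : pt) : pt :=
  (fst x / (a1 ^ 2 - lam), snd x / (a2 ^ 2 - lam)).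
Definition on_conic (a1 a2 lam : R) (x : pt) : Prop :=
  dot (Cmat a1 a2 lam x) x = 1.

Definition line_tangent (a1 a2 lam : R) (x d : pt) : Prop :=
  exists s : R, let q := vadd x (vscal s d) in
    on_conic a1 a2 lam q /\ dot (Cmat a1 a2 lam q) d = 0.

Definition has_caustic (a1 a2 lam : R) (p : nat -> pt) : Prop :=
  lam <> a1 ^ 2 /\ lam <> a2 ^ 2 /\
  forall i, line_tangent a1 a2 lam (p i) (side p i).

Definition J (a1 a2 : R) (p : nat -> pt) : R :=
  - dot (unit_side p 0%nat) (Amat a1 a2 (p 0%nat)).

Definition is_interval (I : R -> Prop) : Prop :=
  forall x y z, I x -> I z -> x <= y <= z -> I y.

Definition family_continuous (I : R -> Prop) (F : R -> nat -> pt) : Prop :=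
  forall (i : nat) (t : R), I t ->
    forall eps : R, 0 < eps -> exists delta : R, 0 < delta /\
      forall s : R, I s -> Rabs (s - t) < delta ->
        Rabs (fst (F s i) - fst (F t i)) < eps /\
        Rabs (snd (F s i) - snd (F t i)) < eps.

Definition billiard_family (a1 a2 lam : R) (n : nat) (I : R -> Prop)
    (F : R -> nat -> pt) : Prop :=
  is_interval I /\ family_continuous I F /\
  (forall t, I t -> billiard_traj a1 a2 n (F t) /\ has_caustic a1 a2 lam (F t)).

(** The sides of a billiard trajectory are tangent to the confocal caustic
    [C_lam], and for a chord of [E] through [x] with direction [d] tangency
    to [C_lam] forces [<d, A x>^2 = lam/(a1^2 a2^2) |d|^2].  Since
    the chord leaves [E] inwards, [<u_1, A p_1> <= 0], so
    [J(P) = sqrt lam / (a1 a2)] depends on the caustic only and is therefore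
    constant along any family of trajectories sharing it. *)

From Stdlib Require Import Reals Lra Psatz.
Open Scope R_scope.

Lemma vnorm_sqr (x : pt) : vnorm x ^ 2 = dot x x.
Proof.
  unfold vnorm; rewrite pow2_sqrt; [reflexivity|].
  destruct x as [x1 x2]; unfold dot; cbn [fst snd]; nra.
Qed.

Lemma vnorm_gt0 (x : pt) : x <> (0, 0) -> 0 < vnorm x.
Proof.
  intros Hx; apply sqrt_lt_R0; destruct x as [x1 x2]; unfold dot; cbn [fst snd].
  destruct (Req_dec x1 0) as [->|]; [destruct (Req_dec x2 0) as [->|]|].
  - now exfalso; apply Hx.
  - nra.
  - nra.
Qed.

Lemma side_neq0 (p : nat -> pt) (i : nat) : p (S i) <> p i -> side p i <> (0, 0).
Proof.
  unfold side, vsub; destruct (p (S i)) as [y1 y2], (p i) as [x1 x2]; cbn [fst snd].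
  intros Hne Hs; injection Hs as H1 H2; apply Hne; f_equal; lra.
Qed.

Lemma dot_vscall (c : R) (x y : pt) : dot (vscal c x) y = c * dot x y.
Proof. unfold dot, vscal; cbn [fst snd]; ring. Qed.

Lemma div_sqr_mul_ge0 (a z : R) : a <> 0 -> 0 <= z / a ^ 2 * z.
Proof.
  intros Ha; assert (Hinv : 0 < / a ^ 2) by (apply Rinv_0_lt_compat; nra).
  unfold Rdiv; nra.
Qed.

(* The chord from a point of [E] to another one points into [E]:
   [<Ay,y> = <Ax,x> + 2 <y - x, Ax> + <A(y - x), y - x>]. *)
Lemma dot_chord_Amat_le0 (a1 a2 : R) (x y : pt) :
  a1 <> 0 -> a2 <> 0 -> on_ellipse a1 a2 x -> on_ellipse a1 a2 y ->
  dot (vsub y x) (Amat a1 a2 x) <= 0.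
Proof.
  destruct x as [x1 x2], y as [y1 y2].
  unfold on_ellipse, Amat, dot, vsub; cbn [fst snd]; intros Ha1 Ha2 Hx Hy.
  pose proof (div_sqr_mul_ge0 a1 (y1 - x1) Ha1).
  pose proof (div_sqr_mul_ge0 a2 (y2 - x2) Ha2).
  enough (Hexp : y1 / a1 ^ 2 * y1 + y2 / a2 ^ 2 * y2
    = x1 / a1 ^ 2 * x1 + x2 / a2 ^ 2 * x2
      + 2 * ((y1 - x1) * (x1 / a1 ^ 2) + (y2 - x2) * (x2 / a2 ^ 2))
      + ((y1 - x1) / a1 ^ 2 * (y1 - x1) + (y2 - x2) / a2 ^ 2 * (y2 - x2))) by lra.
  unfold Rdiv; ring.
Qed.

(* If the line touches [C_lam] at [q = x + s d], write [q = (al P, be Q)]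
   with [al = a1^2 - lam], [be = a2^2 - lam]; then [al P^2 + be Q^2 = 1],
   [P d1 + Q d2 = 0], and the cross product [x × d = q × d] satisfies
   [(x × d)^2 = (al d2^2 + be d1^2)(al P^2 + be Q^2) - al be (P d1 + Q d2)^2]. *)
Lemma cross_sqr_line_tangent (a1 a2 lam : R) (x d : pt) :
  lam <> a1 ^ 2 -> lam <> a2 ^ 2 -> line_tangent a1 a2 lam x d ->
  (fst x * snd d - snd x * fst d) ^ 2
    = (a1 ^ 2 - lam) * snd d ^ 2 + (a2 ^ 2 - lam) * fst d ^ 2.
Proof.
  intros Hl1 Hl2 [s [Hc Ht]].
  destruct x as [x1 x2], d as [d1 d2].
  unfold on_conic, Cmat, dot, vadd, vscal in Hc, Ht; cbn [fst snd] in *.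
  assert (Hal : a1 ^ 2 - lam <> 0) by lra.
  assert (Hbe : a2 ^ 2 - lam <> 0) by lra.
  set (al := a1 ^ 2 - lam) in *; set (be := a2 ^ 2 - lam) in *.
  set (P := (x1 + s * d1) / al) in *; set (Q := (x2 + s * d2) / be) in *.
  assert (HP : x1 = al * P - s * d1) by (unfold P; field; exact Hal).
  assert (HQ : x2 = be * Q - s * d2) by (unfold Q; field; exact Hbe).
  assert (Hconic : al * P ^ 2 + be * Q ^ 2 = 1).
  { rewrite <- Hc; unfold P, Q; field; auto. }
  rewrite HP, HQ.
  transitivity ((al * d2 ^ 2 + be * d1 ^ 2) * (al * P ^ 2 + be * Q ^ 2)
                - al * be * (P * d1 + Q * d2) ^ 2); [ring|].
  rewrite Hconic, Ht; ring.
Qed.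

(* Lagrange's identity
   [(b^2 d1^2 + a^2 d2^2)(b^2 x1^2 + a^2 x2^2) = (b^2 x1 d1 + a^2 x2 d2)^2 + a^2 b^2 (x × d)^2]
   combined with [b^2 x1^2 + a^2 x2^2 = a^2 b^2] on [E]. *)
Lemma dot_Amat_sqr_line_tangent (a1 a2 lam : R) (x d : pt) :
  a1 <> 0 -> a2 <> 0 -> lam <> a1 ^ 2 -> lam <> a2 ^ 2 ->
  on_ellipse a1 a2 x -> line_tangent a1 a2 lam x d ->
  dot d (Amat a1 a2 x) ^ 2 = lam / (a1 ^ 2 * a2 ^ 2) * dot d d.
Proof.
  intros Ha1 Ha2 Hl1 Hl2 Hx Htan.
  pose proof (cross_sqr_line_tangent a1 a2 lam x d Hl1 Hl2 Htan) as Hcross.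
  destruct x as [x1 x2], d as [d1 d2].
  unfold on_ellipse, Amat, dot in *; cbn [fst snd] in *.
  assert (Hx' : a2 ^ 2 * x1 ^ 2 + a1 ^ 2 * x2 ^ 2 = a1 ^ 2 * a2 ^ 2).
  { rewrite <- (Rmult_1_r (a1 ^ 2 * a2 ^ 2)), <- Hx; field; auto. }
  assert (Hlagrange : (a2 ^ 2 * x1 * d1 + a1 ^ 2 * x2 * d2) ^ 2
            = a1 ^ 2 * a2 ^ 2 * lam * (d1 * d1 + d2 * d2)).
  { assert (Hid : (a2 ^ 2 * x1 * d1 + a1 ^ 2 * x2 * d2) ^ 2
                 + a1 ^ 2 * a2 ^ 2 * (x1 * d2 - x2 * d1) ^ 2
               = (a2 ^ 2 * d1 ^ 2 + a1 ^ 2 * d2 ^ 2) * (a2 ^ 2 * x1 ^ 2 + a1 ^ 2 * x2 ^ 2))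
      by ring.
    rewrite Hx', Hcross in Hid.
    apply (Rplus_eq_reg_r (a1 ^ 2 * a2 ^ 2 * ((a1 ^ 2 - lam) * d2 ^ 2 + (a2 ^ 2 - lam) * d1 ^ 2))).
    rewrite Hid; ring. }
  transitivity ((a2 ^ 2 * x1 * d1 + a1 ^ 2 * x2 * d2) ^ 2 / (a1 ^ 2 * a2 ^ 2) ^ 2);
    [field; auto|].
  rewrite Hlagrange; field; auto.
Qed.

Lemma J_caustic (a1 a2 lam : R) (n : nat) (p : nat -> pt) :
  a1 <> 0 -> a2 <> 0 -> billiard_traj a1 a2 n p -> has_caustic a1 a2 lam p ->
  J a1 a2 p = sqrt (lam / (a1 ^ 2 * a2 ^ 2)).
Proof.
  intros Ha1 Ha2 [_ [_ [Hon [Hne _]]]] [Hl1 [Hl2 Htan]].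
  pose proof (vnorm_gt0 _ (side_neq0 p 0 (Hne 0%nat))) as Hr.
  pose proof (vnorm_sqr (side p 0)) as Hrr.
  pose proof (dot_chord_Amat_le0 a1 a2 (p 0%nat) (p 1%nat) Ha1 Ha2 (Hon 0%nat) (Hon 1%nat))
    as Hinward.
  pose proof (dot_Amat_sqr_line_tangent a1 a2 lam (p 0%nat) (side p 0) Ha1 Ha2 Hl1 Hl2
                (Hon 0%nat) (Htan 0%nat)) as Hsqr.
  fold (side p 0) in Hinward.
  unfold J, unit_side; rewrite dot_vscall.
  set (r := vnorm (side p 0)) in *.
  set (c := lam / (a1 ^ 2 * a2 ^ 2)) in *.
  set (v := dot (side p 0) (Amat a1 a2 (p 0%nat))) in *.
  rewrite <- Hrr in Hsqr.
  symmetry; apply sqrt_lem_1.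
  - apply (Rmult_le_reg_r (r ^ 2)); [nra|]; rewrite <- Hsqr; nra.
  - rewrite Ropp_mult_distr_r; apply Rmult_le_pos; [apply Rlt_le, Rinv_0_lt_compat |]; lra.
  - apply (Rmult_eq_reg_r (r ^ 2)); [|nra].
    rewrite <- Hsqr; field; lra.
Qed.

Theorem corollary2p2 (a1 a2 lam : R) (n : nat) (I : R -> Prop)
    (F : R -> nat -> pt) :
  0 < a1 -> 0 < a2 ->
  billiard_family a1 a2 lam n I F ->
  forall s t : R, I s -> I t -> J a1 a2 (F s) = J a1 a2 (F t).
Proof.
  intros Ha1 Ha2 [_ [_ Hfam]] s t Hs Ht.
  destruct (Hfam s Hs) as [Htraj_s Hcaus_s], (Hfam t Ht) as [Htraj_t Hcaus_t].
  assert (Ha1' : a1 <> 0) by lra; assert (Ha2' : a2 <> 0) by lra.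
  now rewrite (J_caustic a1 a2 lam n (F s) Ha1' Ha2' Htraj_s Hcaus_s),
              (J_caustic a1 a2 lam n (F t) Ha1' Ha2' Htraj_t Hcaus_t).
Qed.
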